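(* Let $n\ge3$ be odd. Every self-dual code $C$ in $\mathbb{F}_2^{n+1}$ has a basis $\{\mathbf{y}_1,\ldots,\mathbf{y}_{(n+1)/2}\}$ with $\mathbf{y}_1+\cdots+\mathbf{y}_{(n+1)/2}=\mathbf{j}_{n+1}$.
   Context: A linear code $C\subseteq\mathbb{F}_2^{N}$ is self-dual if $C=C^\perp$ with respect to the standard dot product. $\mathbf{j}_{n+1}$ is the all-ones vector in $\mathbb{F}_2^{n+1}$. *)

From HB Require Import structures.
From mathcomp Require Import all_boot all_order all_algebra.
Set Implicit Arguments. Unset Strict Implicit. Unset Printing Implicit Defensive.
Import GRing.Theory.
Local Open Scope ring_scope.

Definition dotp (N : nat) (x y : 'rV['F_2]_N) : 'F_2 := \sum_(i < N) x 0 i * y 0 i.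

Definition dual_code (N : nat) (C : {vspace 'rV['F_2]_N}) : pred 'rV['F_2]_N :=
  fun x => [forall y : 'rV['F_2]_N, (y \in C) ==> (dotp x y == 0)].

Definition self_dual (N : nat) (C : {vspace 'rV['F_2]_N}) : Prop :=
  forall x : 'rV['F_2]_N, (x \in C) = dual_code C x.

Definition all_ones (N : nat) : 'rV['F_2]_N := const_mx 1.

From mathcomp Require Import all_boot all_order all_algebra.
Set Implicit Arguments.
Unset Strict Implicit.
Unset Printing Implicit Defensive.
Import GRing.Theory.
Local Open Scope ring_scope.

(* Over F_2 we have x.x = x.j for the all-ones vector j, so every word of a
   self-dual code C is orthogonal to j, i.e. j lies in C; and since the
   orthogonal of a space of dimension d has dimension N - d, a self-dual code
   has dimension N/2.  Finally any nonzero vector j of a space U is the sum of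
   a basis of U: complete a basis e_1, ..., e_(k-1) of a complement of <j> in U
   with j - (e_1 + ... + e_(k-1)). *)

Lemma dim_row_fullv (F : fieldType) m : \dim {: 'rV[F]_m} = m.
Proof. by rewrite dimvf /dim /= mul1n. Qed.

Section Orthogonal.

Variables (F : fieldType) (N : nat) (U : {vspace 'rV[F]_N}).

Definition basis_mx : 'M[F]_(\dim U, N) := \matrix_(i < \dim U) (vbasis U)`_i.

Definition orthv : {vspace 'rV[F]_N} := lker (linfun (mulmxr basis_mx^T)).

Lemma mulmx_basis_mx (c : 'rV_(\dim U)) :
  c *m basis_mx = \sum_i c 0 i *: (vbasis U)`_i.
Proof. by rewrite mulmx_sum_row; under eq_bigr do rewrite rowK. Qed.

Lemma basis_mx_free : row_free basis_mx.
Proof.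
rewrite -kermx_eq0; apply/eqP/row_matrixP => i; rewrite row0.
have /sub_kermxP : (row i (kermx basis_mx) <= kermx basis_mx)%MS by exact: row_sub.
have /freeP free_basis := basis_free (vbasisP U).
by rewrite mulmx_basis_mx => /free_basis c0; apply/rowP => k; rewrite c0 mxE.
Qed.

Lemma submx_basis_mx y : y \in U -> (y <= basis_mx)%MS.
Proof.
move/coord_vbasis->; apply/submxP; exists (\row_i coord (vbasis U) i y).
by rewrite mulmx_basis_mx; apply: eq_bigr => i _; rewrite mxE.
Qed.

Lemma orthvP x : reflect (forall y, y \in U -> x *m y^T = 0) (x \in orthv).
Proof.
rewrite memv_ker lfunE /=; apply: (iffP eqP) => [xB0 y | x_orth].
  by case/submx_basis_mx/submxP=> c ->; rewrite trmx_mul mulmxA xB0 mul0mx.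
apply: trmx_inj; rewrite trmx_mul trmxK trmx0; apply/row_matrixP => i.
rewrite row_mul rowK row0 -[(vbasis U)`_i]trmxK -trmx_mul x_orth ?trmx0 //.
by rewrite vbasis_mem // mem_nth // size_tuple.
Qed.

Lemma dim_orthv : (\dim U + \dim orthv)%N = N.
Proof.
pose g : 'Hom(_, 'rV_(\dim U)) := linfun (mulmxr basis_mx^T).
have full_img : limg g = fullv.
  apply/vspaceP => v; rewrite memvf.
  have B_full : row_full basis_mx^T.
    by rewrite /row_full mxrank_tr; exact: basis_mx_free.
  have /submxP[x ->] := submx_full v B_full.
  have -> : x *m basis_mx^T = g x by rewrite lfunE.
  by rewrite memv_img ?memvf.
have := limg_ker_dim g fullv.
by rewrite capfv full_img !dim_row_fullv addnC.
Qed.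

End Orthogonal.

Section BasisSum.

Variables (F : fieldType) (vT : vectType F) (U : {vspace vT}) (j : vT).
Hypotheses (jU : j \in U) (j_neq0 : j != 0).

Lemma exists_basis_sum :
  exists y : (\dim U).-tuple vT, basis_of U y /\ \sum_(i < \dim U) y`_i = j.
Proof.
set D := (U :\: <[j]>)%VS; set e := vbasis D.
have DjU : (D + <[j]> = U)%VS.
  by rewrite addv_diff; apply/addv_idPl; rewrite -memvE.
have dimU : \dim U = (\dim D).+1.
  by rewrite -DjU dimv_disjoint_sum ?capv_diff // dim_vline j_neq0 addn1.
set a := j - \sum_(i < \dim D) e`_i.
have size_y : size (a :: e) == \dim U by rewrite /= size_tuple dimU.
exists (Tuple size_y); split.
  rewrite basisEdim /= size_tuple -dimU leqnn andbT -DjU.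
  have DS : (D <= <<a :: e>>)%VS.
    by rewrite span_cons (span_basis (vbasisP D)) addvSr.
  rewrite subv_add DS -memvE -[j](subrK (\sum_(i < \dim D) e`_i)).
  apply: memvD; first by rewrite memv_span ?mem_head.
  apply: rpred_sum => i _.
  by apply: (subvP DS); rewrite vbasis_mem // mem_nth // size_tuple.
rewrite -[RHS](subrK (\sum_(i < \dim D) e`_i)) -/a.
by rewrite /= dimU big_ord_recl.
Qed.

End BasisSum.

Lemma F2_mul_idem (a : 'F_2) : a * a = a.
Proof. by case: a => [[|[|m]]] // ?; apply/val_inj. Qed.

Lemma dotpE N (x y : 'rV['F_2]_N) : dotp x y = (x *m y^T) 0 0.
Proof. by rewrite mxE; apply: eq_bigr => i _; rewrite mxE. Qed.

Section SelfDual.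

Variables (N : nat) (C : {vspace 'rV['F_2]_N}).
Hypothesis C_self_dual : self_dual C.

Lemma self_dual_orthv : orthv C = C.
Proof.
apply/vspaceP => x; rewrite C_self_dual; apply/orthvP/forall_inP => x_orth y yC.
  by rewrite dotpE x_orth ?mxE.
by rewrite [LHS]mx11_scalar -dotpE (eqP (x_orth y yC)) raddf0.
Qed.

Lemma dim_self_dual : (\dim C).*2 = N.
Proof. by rewrite -addnn -{2}self_dual_orthv dim_orthv. Qed.

Lemma all_ones_self_dual : all_ones N \in C.
Proof.
rewrite C_self_dual; apply/forall_inP => y yC.
suff -> : dotp (all_ones N) y = dotp y y.
  have /forall_inP y_orth : dual_code C y by rewrite -C_self_dual.
  exact: y_orth.
by apply: eq_bigr => i _; rewrite !mxE mul1r F2_mul_idem.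
Qed.

End SelfDual.

Lemma all_ones_neq0 N : all_ones N.+1 != 0.
Proof. by apply/eqP => /rowP/(_ ord0); rewrite !mxE. Qed.

Theorem lemma8p9 (n : nat) (Hn : (3 <= n)%N) (Hodd : odd n)
  (C : {vspace 'rV['F_2]_(n.+1)}) (HC : self_dual C) :
  exists y : ((n.+1)./2).-tuple 'rV['F_2]_(n.+1),
    basis_of C y /\ \sum_(i < (n.+1)./2) y`_i = all_ones (n.+1).
Proof.
have -> : (n.+1)./2 = \dim C by rewrite -{1}(dim_self_dual HC) doubleK.
exact: exists_basis_sum (all_ones_self_dual HC) (all_ones_neq0 n).
Qed.
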